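(* Every proper $K$-poset $V$ has a simplification; that is, there exist a finite integer $\ell\ge0$, proper $K$-posets $V_0=V,V_1,\dots,V_\ell$, and for each $1\le i\le\ell$ a maximal node $n_i$ of $V_{i-1}$ of positive height such that $V_i$ is a splitting of $V_{i-1}$ at $n_i$, with $V_\ell$ simple.
   Context: For a poset $U$: $L(u)=L_U(u)=\{v\le u\}$, $G(u)=\{v\ge u\}$, $L(u)^*,G(u)^*$ these with $u$ removed; height of $u$ is $\dim L(u)$ (dimension = supremum of chain lengths); $H_i$ = height-$i$ nodes; $\operatorname{mub}A$ = minimal common upper bounds; $[b/c]$ = set of $u$ with $G(u)^*=\{b\}$, $L(u)^*=\{c\}$. A poset with $\dim\le2$ is a $K$-poset if $\min U$, $H_2$ are finite, $\operatorname{mub}\{u,v\}$ is finite for distinct minimal $u,v$, and $[u/w]$ is infinite whenever $u>v>w$ for some $v$; proper if $|[u/w]|\in\{0,|U|\}$ for all maximal $u$, minimal $w$. $\mathcal H_U$ = minimal nodes plus height-one nodes dominating at least two minimal nodes. For a poset $W$ with single maximal node $n$ and $\dim W\ge1$: $\mathcal H_W^*=\mathcal H_W\setminus\{n\}$; $\Lambda_W$ = $(H_1\cap\mathcal H_W^* )$ together with all $v\in\mathcal H_W^*$ with $G(v)\cap H_1\cap\mathcal H_W^*=\emptyset$; $d_W(n)=|\Lambda_W|$. A proper $K$-poset $V$ is simple if $d_{L_V(m)}(m)=1$ for every maximal $m$ of positive height. Splitting: for a poset $V$ with a maximal node $m$ of positive height, $U$ is a splitting of $V$ at $m$ if there are a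 finite nonempty $\mathcal M\subseteq\max U$ of positive-height nodes and a surjective order-preserving $\varphi:U\to V$ with $\varphi^{-1}(m)=\mathcal M$, $|\varphi^{-1}(v)|=1$ for $v\ne m$, and whenever $\varphi(x')=x\le y$ there is $y'\ge x'$ with $\varphi(y')=y$. *)

(* Everything is stated relative to a subset S of
   the carrier, so that the "induced subposet" L_V(m) can be handled directly. *)
From Stdlib Require Import List Arith.

Record poset := Poset {
  car :> Type;
  le : car -> car -> Prop;
  le_refl : forall x, le x x;
  le_trans : forall x y z, le x y -> le y z -> le x z;
  le_antisym : forall x y, le x y -> le y x -> x = y
}.

Arguments le {p} _ _.

Section Defs.
Variable P : poset.
Implicit Types (S A : P -> Prop) (u v w x : P).

Definition lt x y := le x y /\ x <> y.

(* a chain of length k (k+1 elements x0 < x1 < ... < xk) inside S *)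
Definition chain_in S (k : nat) : Prop :=
  exists f : nat -> P, (forall i, i <= k -> S (f i)) /\
                       (forall i, i < k -> lt (f i) (f (Datatypes.S i))).

Definition dim_le S (k : nat) : Prop := ~ chain_in S (Datatypes.S k).

Definition finite_set A : Prop := exists l : list P, forall x, A x -> In x l.

Definition Lset S u : P -> Prop := fun v => S v /\ le v u.
Definition Gset S u : P -> Prop := fun v => S v /\ le u v.
Definition minimal_in S u := S u /\ forall v, S v -> le v u -> v = u.
Definition maximal_in S u := S u /\ forall v, S v -> le u v -> v = u.
Definition height_in S u (k : nat) :=
  S u /\ chain_in (Lset S u) k /\ ~ chain_in (Lset S u) (Datatypes.S k).
Definition pos_height_in S u := S u /\ chain_in (Lset S u) 1.

Definition allP : P -> Prop := fun _ => True.

Definition mub2 u v : P -> Prop := fun w =>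
  le u w /\ le v w /\
  forall w', le u w' -> le v w' -> le w' w -> w' = w.

Definition slash b c : P -> Prop := fun u =>
  (forall x, (le u x /\ x <> u) <-> x = b) /\
  (forall x, (le x u /\ x <> u) <-> x = c).

Definition empty_set A := forall x, ~ A x.
Definition same_card_as_carrier A : Prop :=
  exists f : {x : P | A x} -> P,
    (forall a b, f a = f b -> a = b) /\ (forall y, exists a, f a = y).

Definition K_poset : Prop :=
  dim_le allP 2 /\
  finite_set (minimal_in allP) /\
  finite_set (fun u => height_in allP u 2) /\
  (forall u v, minimal_in allP u -> minimal_in allP v -> u <> v ->
     finite_set (mub2 u v)) /\
  (forall u v w, lt v u -> lt w v -> ~ finite_set (slash u w)).

Definition proper_K_poset : Prop :=
  K_poset /\
  forall u w, maximal_in allP u -> minimal_in allP w ->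
    empty_set (slash u w) \/ same_card_as_carrier (slash u w).

Definition Hcal S v : Prop :=
  minimal_in S v \/
  (height_in S v 1 /\
   exists a b, a <> b /\ minimal_in S a /\ minimal_in S b /\ le a v /\ le b v).

(* For W = L_P(m) (single maximal node m): H*_W, Lambda_W, d_W(m) = 1 *)
Definition Hstar m v : Prop := Hcal (Lset allP m) v /\ v <> m.
Definition Lambda m v : Prop :=
  (height_in (Lset allP m) v 1 /\ Hstar m v) \/
  (Hstar m v /\
   ~ exists x, Gset (Lset allP m) v x /\ height_in (Lset allP m) x 1 /\ Hstar m x).
Definition d_is_one m : Prop :=
  exists x, Lambda m x /\ forall y, Lambda m y -> y = x.

Definition simple : Prop :=
  proper_K_poset /\
  forall m, maximal_in allP m -> pos_height_in allP m -> d_is_one m.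

End Defs.

Definition splitting (U V : poset) (m : V) : Prop :=
  exists (M : U -> Prop) (phi : U -> V),
    finite_set U M /\ (exists x, M x) /\
    (forall x, M x -> maximal_in U (allP U) x /\ pos_height_in U (allP U) x) /\
    (forall x y, le x y -> le (phi x) (phi y)) /\
    (forall y, exists x, phi x = y) /\
    (forall x, phi x = m <-> M x) /\
    (forall v, v <> m -> exists x, phi x = v /\ forall x', phi x' = v -> x' = x) /\
    (forall (x' : U) (y : V), le (phi x') y ->
       exists y', le x' y' /\ phi y' = y).

From Stdlib Require Import List Lia Classical ClassicalEpsilon ProofIrrelevance FinFun.

(* Call a maximal node of positive height defective when d <> 1.  A proper K-poset has
   finitely many defective nodes: those of height two, and height-one nodes with two
   minimal nodes below them, which are minimal upper bounds of pairs of minimal nodes.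
   Split V at a defective node m into one copy of m for each l in Lambda = Lambda_{L(m)}:
   the copy for l dominates L(l), and each remaining node x < m (of height one, over a
   unique minimal node c) goes under the copy of some l >= c, chosen so that each slash
   set [m/c] is cut into pieces of cardinality |V|; this uses |V + V| = |V|, available
   (by Schroeder-Bernstein) as soon as two elements of Lambda lie above c.  Every copy
   then has d = 1, lower sets of the other nodes are unchanged, and the slash sets of a
   copy are such pieces, so the splitting is again a proper K-poset with fewer defective
   nodes.  Induction on their number gives the simplification. *)

(** * Heights, Lambda and slash sets *)

Section PosetFacts.
Variable P : poset.
Implicit Types (A B : P -> Prop) (a b c u v w x y z : P).

Lemma lt_le_trans x y z : lt P x y -> le y z -> lt P x z.
Proof.
  intros [Hxy Hne] Hyz. split; [eapply le_trans; eauto|].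
  intros ->. apply Hne, le_antisym; auto.
Qed.

Lemma le_lt_trans x y z : le x y -> lt P y z -> lt P x z.
Proof.
  intros Hxy [Hyz Hne]. split; [eapply le_trans; eauto|].
  intros ->. apply Hne, le_antisym; auto.
Qed.

Lemma lt_trans x y z : lt P x y -> lt P y z -> lt P x z.
Proof. intros Hxy [Hyz _]. eapply lt_le_trans; eauto. Qed.

Lemma lt_irrefl x : ~ lt P x x.
Proof. intros [_ H]. auto. Qed.

Definition minimal x := forall y, le y x -> y = x.
Definition maximal x := forall y, le x y -> y = x.
Definition height1 x := (exists y, lt P y x) /\ ~ exists y z, lt P z y /\ lt P y x.
Definition height_ge2 x := exists y z, lt P z y /\ lt P y x.
Definition two_minimals_below x :=
  exists a b, a <> b /\ minimal a /\ minimal b /\ le a x /\ le b x.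

Lemma not_minimal_lt x : ~ minimal x -> exists y, lt P y x.
Proof.
  intros Hx. apply NNPP. intros Hno. apply Hx. intros y Hy.
  apply NNPP. intros Hne. apply Hno. exists y. split; auto.
Qed.

Lemma minimal_iff_no_lt x : minimal x <-> ~ exists y, lt P y x.
Proof.
  split.
  - intros Hx [y [Hyx Hne]]. apply Hne, Hx, Hyx.
  - intros Hno. apply NNPP. intros Hx. apply Hno, not_minimal_lt, Hx.
Qed.

Lemma minimal_not_gt x y : minimal x -> ~ lt P y x.
Proof. intros Hx [Hyx Hne]. apply Hne, Hx, Hyx. Qed.

Lemma minimal_below_height1 v t : height1 v -> lt P t v -> minimal t.
Proof.
  intros [_ Hv] Htv. apply NNPP. intros Ht.
  destruct (not_minimal_lt t Ht) as [y Hy]. apply Hv. eauto.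
Qed.

Lemma height1_mub v : height1 v -> two_minimals_below v ->
  exists a b, minimal a /\ minimal b /\ a <> b /\ mub2 P a b v.
Proof.
  intros Hv [a [b [Hab [Ha [Hb [Hav Hbv]]]]]]. exists a, b.
  repeat split; auto. intros w Haw Hbw Hwv. apply NNPP. intros Hne.
  assert (Hw : minimal w) by (apply (minimal_below_height1 v); [exact Hv | split; auto]).
  apply Hab. rewrite (Hw a Haw), (Hw b Hbw). reflexivity.
Qed.

Definition chain4 (a0 a1 a2 a3 : P) (i : nat) : P :=
  match i with 0 => a0 | 1 => a1 | 2 => a2 | _ => a3 end.

Lemma chain_in_mono A B k : (forall x, A x -> B x) -> chain_in P A k -> chain_in P B k.
Proof. intros HAB [f [Hin Hlt]]. exists f. auto. Qed.

Lemma chain1_below x : chain_in P (Lset P (allP P) x) 1 <-> exists y, lt P y x.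
Proof.
  split.
  - intros [f [Hin Hlt]]. exists (f 0).
    destruct (Hin 1 (le_n _)) as [_ H]. eapply lt_le_trans; eauto.
  - intros [y Hy]. exists (chain4 y x x x). split.
    + intros [|[|i]] Hi; try lia; split; try exact I; [apply Hy | apply le_refl].
    + intros [|i] Hi; [exact Hy | lia].
Qed.

Lemma chain2_below x :
  chain_in P (Lset P (allP P) x) 2 <-> exists y z, lt P z y /\ lt P y x.
Proof.
  split.
  - intros [f [Hin Hlt]]. exists (f 1), (f 0). split; [apply Hlt; lia|].
    destruct (Hin 2 (le_n _)) as [_ H]. eapply lt_le_trans; eauto.
  - intros [y [z [Hzy Hyx]]]. exists (chain4 z y x x). split.
    + intros [|[|[|i]]] Hi; try lia; split; try exact I.
      * eapply le_trans; [apply Hzy | apply Hyx].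
      * apply Hyx.
      * apply le_refl.
    + intros [|[|i]] Hi; simpl; auto; lia.
Qed.

Lemma chain3_iff :
  chain_in P (allP P) 3 <->
  exists a0 a1 a2 a3, lt P a0 a1 /\ lt P a1 a2 /\ lt P a2 a3.
Proof.
  split.
  - intros [f [_ Hlt]]. exists (f 0), (f 1), (f 2), (f 3).
    repeat split; apply Hlt; lia.
  - intros [a0 [a1 [a2 [a3 [H1 [H2 H3]]]]]]. exists (chain4 a0 a1 a2 a3).
    split; [intros; exact I|]. intros [|[|[|i]]] Hi; simpl; auto; lia.
Qed.

Definition dim2 := dim_le P (allP P) 2.

Lemma dim2_no_chain3 : dim2 ->
  forall a0 a1 a2 a3, lt P a0 a1 -> lt P a1 a2 -> lt P a2 a3 -> False.
Proof. intros D a0 a1 a2 a3 H1 H2 H3. apply D, chain3_iff. eauto 10. Qed.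

Lemma chain_in_Lset_Lset c v k : le v c ->
  chain_in P (Lset P (Lset P (allP P) c) v) k <-> chain_in P (Lset P (allP P) v) k.
Proof.
  intros Hvc. split; apply chain_in_mono; intros y; unfold Lset, allP.
  - intros [_ H]. split; auto.
  - intros [_ H]. split; auto. split; [exact I | eapply le_trans; eauto].
Qed.

Lemma minimal_in_all x : minimal_in P (allP P) x <-> minimal x.
Proof.
  split.
  - intros [_ H] y Hy. apply H; [exact I | auto].
  - intros H. split; [exact I|]. intros y _ Hy. auto.
Qed.

Lemma maximal_in_all x : maximal_in P (allP P) x <-> maximal x.
Proof.
  split.
  - intros [_ H] y Hy. apply H; [exact I | auto].
  - intros H. split; [exact I|]. intros y _ Hy. auto.
Qed.

Lemma minimal_in_Lset c v : minimal_in P (Lset P (allP P) c) v <-> le v c /\ minimal v.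
Proof.
  split.
  - intros [[_ Hvc] H]. split; auto. intros y Hy. apply H; auto.
    split; [exact I | eapply le_trans; eauto].
  - intros [Hvc H]. split; [split; [exact I | auto]|]. intros y _ Hy. auto.
Qed.

Lemma height1_in_Lset c v : height_in P (Lset P (allP P) c) v 1 <-> le v c /\ height1 v.
Proof.
  unfold height_in, height1. rewrite <- chain1_below, <- chain2_below.
  split.
  - intros [[_ Hvc] H]. rewrite !chain_in_Lset_Lset in H by auto. auto.
  - intros [Hvc H]. rewrite !chain_in_Lset_Lset by auto. split; [split; [exact I|]|]; auto.
Qed.

Lemma height2_in_all x : dim2 -> height_in P (allP P) x 2 <-> height_ge2 x.
Proof.
  intros D. unfold height_in, height_ge2. rewrite <- chain2_below. split.
  - intros [_ [H _]]. exact H.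
  - intros H. split; [exact I|]. split; auto.
    intros C. apply D. eapply chain_in_mono; [|exact C]. intros; exact I.
Qed.

Lemma pos_height_in_all x : pos_height_in P (allP P) x <-> exists y, lt P y x.
Proof.
  unfold pos_height_in. rewrite <- chain1_below.
  split; [intros [_ H]; exact H | intros H; split; [exact I | exact H]].
Qed.

Lemma slash_iff b c t : slash P b c t <->
  (lt P t b /\ forall s, lt P t s -> s = b) /\ (lt P c t /\ forall s, lt P s t -> s = c).
Proof.
  unfold slash, lt. split.
  - intros [Hup Hdown].
    destruct (proj2 (Hup b) eq_refl) as [Htb Hbt].
    destruct (proj2 (Hdown c) eq_refl) as [Hct Hc].
    repeat split; auto; intros s [Hs Hne]; [apply Hup | apply Hdown]; auto.
  - intros [[[Htb Hbt] Hup] [[Hct Hc] Hdown]].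
    split; intros s; split; try (intros ->; split; auto); intros [Hs Hne];
      [apply Hup | apply Hdown]; split; auto.
Qed.

Lemma slash_lower_unique b c t : slash P b c t -> lt P c t /\ forall s, lt P s t -> s = c.
Proof. intros Ht. apply slash_iff in Ht. apply Ht. Qed.

Definition in_H c v :=
  le v c /\ (minimal v \/ height1 v /\ two_minimals_below v).
Definition in_Hstar c v := in_H c v /\ v <> c.
Definition in_Lambda c v :=
  in_Hstar c v /\ (height1 v \/ ~ exists x, in_Hstar c x /\ le v x /\ height1 x).

Lemma Hcal_iff c v : Hcal P (Lset P (allP P) c) v <-> in_H c v.
Proof.
  unfold Hcal, in_H, two_minimals_below.
  rewrite minimal_in_Lset, height1_in_Lset. split.
  - intros [[Hvc Hv] | [[Hvc Hv] [a [b [Hab [Ha [Hb [Hav Hbv]]]]]]]]; [auto|].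
    rewrite minimal_in_Lset in Ha, Hb.
    split; auto. right. split; auto. exists a, b. intuition.
  - intros [Hvc [Hv | [Hv [a [b [Hab [Ha [Hb [Hav Hbv]]]]]]]]]; [auto|].
    right. split; auto. exists a, b. rewrite !minimal_in_Lset.
    repeat split; auto; eapply le_trans; eauto.
Qed.

Lemma Hstar_iff c v : Hstar P c v <-> in_Hstar c v.
Proof. unfold Hstar, in_Hstar. rewrite Hcal_iff. tauto. Qed.

Lemma Lambda_iff c v : Lambda P c v <-> in_Lambda c v.
Proof.
  unfold Lambda, in_Lambda. rewrite !Hstar_iff, height1_in_Lset.
  assert (Habove : (exists x, Gset P (Lset P (allP P) c) v x /\
                      height_in P (Lset P (allP P) c) x 1 /\ Hstar P c x) <->
                   (exists x, in_Hstar c x /\ le v x /\ height1 x)).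
  { split.
    - intros [x [[_ Hvx] [Hx Hstx]]]. rewrite height1_in_Lset in Hx.
      rewrite Hstar_iff in Hstx. exists x. tauto.
    - intros [x [Hstx [Hvx Hx]]]. exists x.
      assert (Hxc : le x c) by apply Hstx.
      rewrite height1_in_Lset, Hstar_iff.
      split; [split; [split; [exact I | exact Hxc] | exact Hvx] | auto]. }
  rewrite Habove. split.
  - intros [[[_ Hv] Hst] | [Hst Hno]]; auto.
  - intros [Hst [Hv | Hno]].
    + left. split; [split; [apply Hst | exact Hv] | exact Hst].
    + right. split; auto.
Qed.

Lemma d_is_one_iff c :
  d_is_one P c <-> exists x, in_Lambda c x /\ forall y, in_Lambda c y -> y = x.
Proof.
  unfold d_is_one. split; intros [x [Hx Huniq]]; exists x;
    (split; [apply Lambda_iff; auto | intros y Hy; apply Huniq, Lambda_iff; auto]).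
Qed.

Lemma slash_not_in_H m x z t : slash P x z t -> ~ in_H m t.
Proof.
  intros Hs [_ Ht]. apply slash_iff in Hs. destruct Hs as [_ [Hzt Hdown]].
  assert (Hlow : forall a, minimal a -> le a t -> a = z).
  { intros a Ha Hat. apply Hdown. split; auto. intros ->. eapply minimal_not_gt; eauto. }
  destruct Ht as [Htmin | [_ [a [b [Hab [Ha [Hb [Hat Hbt]]]]]]]].
  - eapply minimal_not_gt; eauto.
  - apply Hab. rewrite (Hlow a), (Hlow b); auto.
Qed.

End PosetFacts.

Section DimTwo.
Variable P : poset.
Hypothesis D : dim2 P.
Implicit Types (c l m t x y z : P).

Lemma minimal_of_lt_lt x y z : lt P z x -> lt P x y -> minimal P z.
Proof.
  intros Hzx Hxy. apply NNPP. intros Hz.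
  destruct (not_minimal_lt P z Hz) as [w Hw]. eapply dim2_no_chain3; eauto.
Qed.

Lemma height1_iff_not_minimal x y : lt P x y -> height1 P x <-> ~ minimal P x.
Proof.
  intros Hxy. split.
  - intros [[z Hz] _] Hx. eapply minimal_not_gt; eauto.
  - intros Hx. split; [apply not_minimal_lt; auto|].
    intros [x' [z [Hzx' Hx'x]]].
    apply (minimal_not_gt P x' z); [eapply minimal_of_lt_lt|]; eauto.
Qed.

Lemma exists_minimal_below x : exists z, le z x /\ minimal P z.
Proof.
  destruct (classic (minimal P x)) as [Hx | Hx]; [exists x; split; auto; apply le_refl|].
  destruct (not_minimal_lt P x Hx) as [y Hyx].
  destruct (classic (minimal P y)) as [Hy | Hy]; [exists y; split; auto; apply Hyx|].
  destruct (not_minimal_lt P y Hy) as [z Hzy]. exists z. split.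
  - eapply le_trans; [apply Hzy | apply Hyx].
  - eapply minimal_of_lt_lt; eauto.
Qed.

Lemma height1_d_is_one v : height1 P v -> ~ two_minimals_below P v -> d_is_one P v.
Proof.
  intros Hv Hnot. apply d_is_one_iff.
  destruct (exists_minimal_below v) as [c [Hcv Hc]].
  assert (Hcv' : lt P c v).
  { split; auto. intros ->. destruct Hv as [[y Hy] _]. eapply minimal_not_gt; eauto. }
  exists c. split.
  - split; [split; [split; auto | apply Hcv'] |]. right.
    intros [x [[[Hxv _] Hne] [Hcx [[y Hy] _]]]].
    apply (proj2 Hv). exists x, y. split; auto. split; auto.
  - intros t [[[Htv Ht] Hne] _].
    assert (Htmin : minimal P t)
      by (apply (minimal_below_height1 P v); [exact Hv | split; auto]).
    apply NNPP. intros Htc. apply Hnot. exists t, c. repeat split; auto.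
Qed.

Definition uncovered m x := lt P x m /\ ~ exists l, in_Lambda P m l /\ le x l.

Lemma Lambda_lt m l : in_Lambda P m l -> lt P l m.
Proof. intros [[[Hlm _] Hne] _]. split; auto. Qed.

Lemma Lambda_cases m l : in_Lambda P m l ->
  (height1 P l /\ two_minimals_below P l) \/
  (minimal P l /\ ~ exists x, in_Hstar P m x /\ le l x /\ height1 P x).
Proof.
  intros [[[_ [Hmin | Hh]] _] [Hh1 | Hno]]; auto.
  exfalso. destruct Hh1 as [[y Hy] _]. eapply minimal_not_gt; eauto.
Qed.

Lemma Lambda_of_height1 m t : lt P t m -> height1 P t -> two_minimals_below P t ->
  in_Lambda P m t.
Proof. intros [Htm Hne] Ht Htwo. repeat split; auto. Qed.

Lemma minimal_covered m c : lt P c m -> minimal P c ->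
  exists l, in_Lambda P m l /\ le c l.
Proof.
  intros [Hcm Hne] Hc.
  destruct (classic (exists x, in_Hstar P m x /\ le c x /\ height1 P x))
    as [[x [Hx [Hcx Hxh]]] | Hno].
  - exists x. split; auto. split; auto.
  - exists c. split; [|apply le_refl]. split; auto. repeat split; auto.
Qed.

Lemma uncovered_not_minimal m x : uncovered m x -> ~ minimal P x.
Proof.
  intros [Hxm Hno] Hx. apply Hno. apply minimal_covered; auto.
Qed.

Lemma uncovered_not_two_minimals m x : uncovered m x -> ~ two_minimals_below P x.
Proof.
  intros Hu Htwo. apply (proj2 Hu). exists x. split; [|apply le_refl].
  apply Lambda_of_height1; auto; [apply Hu|].
  apply (height1_iff_not_minimal x m); [apply Hu|]. eapply uncovered_not_minimal; eauto.
Qed.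

Lemma uncovered_unique_lower m x : uncovered m x ->
  exists c, lt P c x /\ minimal P c /\ forall z, lt P z x -> z = c.
Proof.
  intros Hu. destruct (not_minimal_lt P x (uncovered_not_minimal m x Hu)) as [c Hcx].
  assert (Hbelow : forall z, lt P z x -> minimal P z)
    by (intros z Hz; eapply minimal_of_lt_lt; [exact Hz | apply Hu]).
  exists c. split; auto. split; auto. intros z Hzx. apply NNPP. intros Hzc.
  apply (uncovered_not_two_minimals m x Hu). exists z, c.
  repeat split; auto; [apply Hzx | apply Hcx].
Qed.

Lemma slash_uncovered m z t : slash P m z t -> uncovered m t.
Proof.
  intros Hs. pose proof Hs as Hs'. apply slash_iff in Hs'.
  destruct Hs' as [[Htm Hup] _]. split; auto. intros [l [Hl Htl]].
  apply (slash_not_in_H P m m z t Hs).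
  destruct (classic (t = l)) as [-> | Hne]; [apply Hl|].
  exfalso. apply (lt_irrefl P m). rewrite <- (Hup l) at 1; [apply Lambda_lt; auto | split; auto].
Qed.

End DimTwo.

Lemma sig_eq {X : Type} {A : X -> Prop} (a b : {x | A x}) :
  proj1_sig a = proj1_sig b -> a = b.
Proof. apply eq_sig_hprop. intros. apply proof_irrelevance. Qed.

(** * Finite sets and cardinalities *)

Section FiniteSets.
Variable P : poset.
Implicit Types (A B C : P -> Prop).

Lemma finite_subset A B : finite_set P A -> (forall x, B x -> A x) -> finite_set P B.
Proof. intros [l Hl] HBA. exists l. auto. Qed.

Lemma finite_union A B C : finite_set P A -> finite_set P B ->
  (forall x, C x -> A x \/ B x) -> finite_set P C.
Proof.
  intros [la Ha] [lb Hb] HC. exists (la ++ lb). intros x Hx. apply in_or_app.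
  destruct (HC x Hx); auto.
Qed.

Lemma finite_pairs A (F : P -> P -> P -> Prop) : finite_set P A ->
  (forall a b, A a -> A b -> finite_set P (F a b)) ->
  finite_set P (fun x => exists a b, A a /\ A b /\ F a b x).
Proof.
  intros [la Ha] HF.
  destruct (choice (fun ab (l : list P) => A (fst ab) -> A (snd ab) ->
                      forall x, F (fst ab) (snd ab) x -> In x l)) as [g Hg].
  { intros [a b]. destruct (classic (A a /\ A b)) as [[Ha' Hb'] | Hn].
    - destruct (HF a b Ha' Hb') as [l Hl]. exists l. auto.
    - exists nil. intros Ha' Hb'. tauto. }
  exists (flat_map (fun a => flat_map (fun b => g (a, b)) la) la).
  intros x [a [b [Ha' [Hb' Hx]]]]. apply in_flat_map. exists a. split; [apply Ha; exact Ha'|].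
  apply in_flat_map. exists b. split; [apply Ha; exact Hb'|]. exact (Hg (a, b) Ha' Hb' x Hx).
Qed.

Lemma finite_exact_list A : finite_set P A -> exists l, forall x, A x <-> In x l.
Proof.
  intros [l Hl].
  exists (filter (fun x => if excluded_middle_informative (A x) then true else false) l).
  intros x. rewrite filter_In.
  destruct (excluded_middle_informative (A x)) as [Hx | Hx].
  - split; [split; auto | tauto].
  - split; [tauto | intros [_ H]; discriminate].
Qed.

Lemma finite_set_sig (S B : P -> Prop) : finite_set P B ->
  exists l : list {x | S x}, forall a, B (proj1_sig a) -> In a l.
Proof.
  intros [lb Hb].
  exists (flat_map (fun x => match excluded_middle_informative (S x) with
                             | left h => exist S x h :: nil
                             | right _ => nil end) lb).
  intros [x h] Hx. apply in_flat_map. exists x. split; [apply Hb, Hx|].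
  destruct (excluded_middle_informative (S x)) as [h' | Hn]; [|contradiction].
  left. apply sig_eq. reflexivity.
Qed.

Lemma not_finite_nonempty A : ~ finite_set P A -> exists x, A x.
Proof.
  intros Hinf. apply NNPP. intros Hno. apply Hinf. exists nil. intros x Hx. apply Hno. eauto.
Qed.

End FiniteSets.

Lemma finite_image (P Q : poset) (g : P -> Q) (B : P -> Prop) (A : Q -> Prop) :
  finite_set P B -> (forall y, A y -> exists x, B x /\ g x = y) -> finite_set Q A.
Proof.
  intros [lb Hb] HA. exists (map g lb). intros y Hy.
  destruct (HA y Hy) as [x [Hx <-]]. apply in_map. auto.
Qed.

Definition equipotent (X Y : Type) := exists f : X -> Y, Injective f /\ Surjective f.

Definition full_card {X : Type} (A : X -> Prop) :=
  exists i : X -> X, Injective i /\ forall x, A x <-> exists y, i y = x.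

Lemma equipotent_sym X Y : equipotent X Y -> equipotent Y X.
Proof.
  intros [f [Hinj Hsurj]].
  destruct (choice (fun y x => f x = y) Hsurj) as [g Hg].
  exists g. split.
  - intros a b E. rewrite <- (Hg a), <- (Hg b), E. reflexivity.
  - intros x. exists (f x). apply Hinj, Hg.
Qed.

Lemma equipotent_trans X Y Z : equipotent X Y -> equipotent Y Z -> equipotent X Z.
Proof.
  intros [f [Hfi Hfs]] [g [Hgi Hgs]]. exists (fun x => g (f x)). split.
  - intros a b E. auto.
  - intros z. destruct (Hgs z) as [y <-]. destruct (Hfs y) as [x <-]. eauto.
Qed.

Section SchroederBernstein.
Variables (X Y : Type) (f : X -> Y) (g : Y -> X).
Hypotheses (f_inj : Injective f) (g_inj : Injective g).

Inductive sb_chain : X -> Prop :=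
| sb_base x : (~ exists y, g y = x) -> sb_chain x
| sb_step x : sb_chain x -> sb_chain (g (f x)).

Lemma not_sb_chain_in_range x : ~ sb_chain x -> exists y, g y = x.
Proof. intros H. apply NNPP. intros Hno. apply H. constructor. exact Hno. Qed.

Definition sb_map (x : X) : Y :=
  match excluded_middle_informative (sb_chain x) with
  | left _ => f x
  | right nc => proj1_sig (constructive_indefinite_description _ (not_sb_chain_in_range x nc))
  end.

Lemma sb_map_chain x : sb_chain x -> sb_map x = f x.
Proof.
  intros H. unfold sb_map.
  destruct (excluded_middle_informative (sb_chain x)); [reflexivity | contradiction].
Qed.

Lemma sb_map_not_chain x : ~ sb_chain x -> g (sb_map x) = x.
Proof.
  intros H. unfold sb_map.
  destruct (excluded_middle_informative (sb_chain x)); [contradiction|].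
  apply proj2_sig.
Qed.

Theorem schroeder_bernstein : equipotent X Y.
Proof.
  exists sb_map. split.
  - assert (Hmixed : forall a b, sb_chain a -> ~ sb_chain b -> sb_map a <> sb_map b).
    { intros a b Ha Hb E. apply Hb. rewrite <- (sb_map_not_chain b Hb), <- E, sb_map_chain
        by exact Ha. apply sb_step, Ha. }
    intros a b E.
    destruct (classic (sb_chain a)) as [Ha | Ha], (classic (sb_chain b)) as [Hb | Hb].
    + rewrite !sb_map_chain in E by assumption. auto.
    + exfalso. eapply Hmixed; eauto.
    + exfalso. eapply Hmixed; eauto.
    + rewrite <- (sb_map_not_chain a Ha), <- (sb_map_not_chain b Hb), E. reflexivity.
  - intros y. destruct (classic (sb_chain (g y))) as [H | H].
    + inversion H as [x Hx E | x Hx E]; [exfalso; eauto|].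
      apply g_inj in E. exists x. rewrite sb_map_chain; auto.
    + exists (g y). apply g_inj, sb_map_not_chain, H.
Qed.

End SchroederBernstein.

Section FullCard.
Variable X : Type.
Implicit Types (A B C : X -> Prop).

Lemma full_card_iff A : full_card A <-> equipotent {x | A x} X.
Proof.
  split.
  - intros [i [Hi Hrange]]. apply equipotent_sym.
    assert (HA : forall y, A (i y)) by (intros y; apply Hrange; eauto).
    exists (fun y => exist _ (i y) (HA y)). split.
    + intros a b E. apply Hi. exact (f_equal (@proj1_sig _ _) E).
    + intros [x Hx]. destruct (proj1 (Hrange x) Hx) as [y <-]. exists y. apply sig_eq. reflexivity.
  - intros E. apply equipotent_sym in E. destruct E as [g [Hgi Hgs]].
    exists (fun y => proj1_sig (g y)). split.
    + intros a b E. apply Hgi, sig_eq, E.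
    + intros x. split.
      * intros Hx. destruct (Hgs (exist _ x Hx)) as [y Hy]. exists y. rewrite Hy. reflexivity.
      * intros [y <-]. apply proj2_sig.
Qed.

Lemma full_card_mono B C : full_card B -> (forall x, B x -> C x) -> full_card C.
Proof.
  intros [i [Hi Hrange]] HBC. apply full_card_iff, equipotent_sym.
  assert (HC : forall y, C (i y)) by (intros y; apply HBC, Hrange; eauto).
  apply (schroeder_bernstein _ _ (fun y => exist _ (i y) (HC y)) (@proj1_sig _ _)).
  - intros a b E. apply Hi. exact (f_equal (@proj1_sig _ _) E).
  - intros a b E. apply sig_eq, E.
Qed.

Lemma sum_self_equipotent A B : (forall x, A x -> B x -> False) ->
  full_card A -> full_card B -> equipotent (X + X) X.
Proof.
  intros Hdisj [i [Hi Hri]] [j [Hj Hrj]].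
  apply (schroeder_bernstein _ _ (fun s => match s with inl x => i x | inr x => j x end) inl).
  - intros [a | a] [b | b] E.
    + f_equal. auto.
    + exfalso. apply (Hdisj (i a)); [apply Hri; exists a | apply Hrj; exists b]; auto.
    + exfalso. apply (Hdisj (j a)); [apply Hri; exists b | apply Hrj; exists a]; auto.
    + f_equal. auto.
  - intros a b E. injection E. auto.
Qed.

Lemma full_card_halves A : equipotent (X + X) X -> full_card A ->
  exists A1 A2, full_card A1 /\ full_card A2 /\
    (forall x, A1 x -> A x) /\ (forall x, A2 x -> A x) /\
    (forall x, A1 x -> A2 x -> False).
Proof.
  intros [e [He _]] [i [Hi Hrange]].
  exists (fun x => exists y, i (e (inl y)) = x), (fun x => exists y, i (e (inr y)) = x).
  repeat split.
  - exists (fun y => i (e (inl y))). split; [|tauto].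
    intros a b E. apply Hi, He in E. injection E. auto.
  - exists (fun y => i (e (inr y))). split; [|tauto].
    intros a b E. apply Hi, He in E. injection E. auto.
  - intros x [y <-]. apply Hrange. eauto.
  - intros x [y <-]. apply Hrange. eauto.
  - intros x [a <-] [b E]. apply Hi, He in E. discriminate.
Qed.

Lemma full_card_partition (T : Type) : equipotent (X + X) X ->
  forall (L : list T) A, L <> nil -> full_card A ->
  exists q : X -> T, (forall x, In (q x) L) /\
    forall t, In t L -> full_card (fun x => A x /\ q x = t).
Proof.
  intros HXX L. induction L as [|t L IH]; intros A HL HA; [congruence|].
  destruct (classic (L = nil)) as [-> | HLne].
  - exists (fun _ => t). split; [left; reflexivity|].
    intros t' [<- | []]. apply (full_card_mono A); auto.
  - destruct (full_card_halves A HXX HA) as [A1 [A2 [H1 [H2 [H1A [H2A Hdisj]]]]]].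
    destruct (IH A2 HLne H2) as [q [Hq HqL]].
    exists (fun x => if excluded_middle_informative (A1 x) then t else q x). split.
    + intros x. destruct (excluded_middle_informative (A1 x)); [left | right]; auto.
    + intros t' [<- | Ht'].
      * apply (full_card_mono A1 _ H1). intros x Hx.
        destruct (excluded_middle_informative (A1 x)); [auto | contradiction].
      * apply (full_card_mono _ _ (HqL t' Ht')). intros x [Hx Hqx].
        destruct (excluded_middle_informative (A1 x)) as [Hx1 | _].
        -- exfalso. eauto.
        -- auto.
Qed.

End FullCard.

Lemma finite_preimage {X Y : Type} (i : X -> Y) : Injective i ->
  forall la : list Y, exists lv, forall v, In (i v) la -> In v lv.
Proof.
  intros Hi la. induction la as [|a la [lv Hlv]]; [exists nil; intros v []|].
  destruct (classic (exists v0, i v0 = a)) as [[v0 Hv0] | Hno].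
  - exists (v0 :: lv). intros v [E | Hv]; [left; apply Hi; congruence | right; auto].
  - exists lv. intros v [E | Hv]; auto. exfalso. eauto.
Qed.

Lemma full_card_finite (P : poset) (F : P -> Prop) : full_card F -> finite_set P F ->
  forall B, finite_set P B.
Proof.
  intros [i [Hi Hrange]] [lf Hf] B.
  destruct (finite_preimage i Hi lf) as [lv Hlv].
  exists lv. intros v _. apply Hlv, Hf, Hrange. eauto.
Qed.

Lemma equipotent_sig_map {X Y : Type} (F : X -> Y) (A : X -> Prop) (B : Y -> Prop) :
  (forall x, A x -> B (F x)) -> (forall a b, A a -> A b -> F a = F b -> a = b) ->
  (forall y, B y -> exists x, A x /\ F x = y) -> equipotent {x | A x} {y | B y}.
Proof.
  intros HAB Hinj Hsurj.
  exists (fun a => exist _ (F (proj1_sig a)) (HAB _ (proj2_sig a))). split.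
  - intros [a Ha] [b Hb] E. apply sig_eq. simpl.
    apply Hinj; auto. exact (f_equal (@proj1_sig _ _) E).
  - intros [y Hy]. destruct (Hsurj y Hy) as [x [Hx <-]].
    exists (exist _ x Hx). apply sig_eq. reflexivity.
Qed.
(** * Local order isomorphisms *)

Section LocalIso.
Variables (Q P : poset) (f : Q -> P) (G : Q -> Prop).
Hypothesis G_down : forall a b, le a b -> G b -> G a.
Hypothesis f_le_iff : forall a b, G a -> G b -> le (f a) (f b) <-> le a b.
Hypothesis f_lift : forall b y, G b -> le y (f b) -> exists a, le a b /\ f a = y.
Implicit Types (a b c v : Q).

Lemma local_inj a b : G a -> G b -> f a = f b -> a = b.
Proof.
  intros Ha Hb E. apply le_antisym; apply f_le_iff; auto; rewrite E; apply le_refl.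
Qed.

Lemma local_lt_iff a b : G a -> G b -> lt P (f a) (f b) <-> lt Q a b.
Proof.
  intros Ha Hb. unfold lt. rewrite f_le_iff by auto.
  split; intros [Hle Hne]; split; auto; intros E.
  - subst. auto.
  - apply Hne, local_inj; auto.
Qed.

Lemma local_lt_lift b y : G b -> lt P y (f b) -> exists a, lt Q a b /\ f a = y.
Proof.
  intros Hb Hy. destruct (f_lift b y Hb (proj1 Hy)) as [a [Hab <-]].
  exists a. split; auto. apply local_lt_iff; eauto.
Qed.

Lemma local_ex_lt b : G b -> (exists a, lt Q a b) <-> exists y, lt P y (f b).
Proof.
  intros Hb. split.
  - intros [a Ha]. exists (f a). apply local_lt_iff; eauto. apply (G_down a b); auto. apply Ha.
  - intros [y Hy]. destruct (local_lt_lift b y Hb Hy) as [a [Ha _]]. eauto.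
Qed.

Lemma local_ex_lt2 b : G b ->
  (exists a c, lt Q c a /\ lt Q a b) <-> exists y z, lt P z y /\ lt P y (f b).
Proof.
  intros Hb. split.
  - intros [a [c [Hca Hab]]].
    assert (Ha : G a) by (apply (G_down a b); auto; apply Hab).
    assert (Hc : G c) by (apply (G_down c a); auto; apply Hca).
    exists (f a), (f c). split; apply local_lt_iff; auto.
  - intros [y [z [Hzy Hyb]]]. destruct (local_lt_lift b y Hb Hyb) as [a [Hab <-]].
    assert (Ha : G a) by (apply (G_down a b); auto; apply Hab).
    destruct (local_lt_lift a z Ha Hzy) as [c [Hca _]]. eauto.
Qed.

Lemma local_lower_unique z t : G z -> G t ->
  (lt Q z t /\ forall s, lt Q s t -> s = z) <->
  (lt P (f z) (f t) /\ forall s, lt P s (f t) -> s = f z).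
Proof.
  intros Hz Ht. rewrite local_lt_iff by auto. split; intros [Hzt Hdown]; split; auto.
  - intros s Hs. destruct (local_lt_lift t s Ht Hs) as [a [Hat <-]].
    rewrite (Hdown a Hat). reflexivity.
  - intros s Hs. assert (Gs : G s) by (apply (G_down s t); auto; apply Hs).
    apply local_inj; auto. apply Hdown, local_lt_iff; auto.
Qed.

Lemma local_minimal b : G b -> minimal Q b <-> minimal P (f b).
Proof. intros Hb. rewrite !minimal_iff_no_lt, local_ex_lt by auto. tauto. Qed.

Lemma local_height1 b : G b -> height1 Q b <-> height1 P (f b).
Proof. intros Hb. unfold height1. rewrite local_ex_lt, local_ex_lt2 by auto. tauto. Qed.

Lemma local_height_ge2 b : G b -> height_ge2 Q b <-> height_ge2 P (f b).
Proof. apply local_ex_lt2. Qed.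

Lemma local_two_minimals b : G b -> two_minimals_below Q b <-> two_minimals_below P (f b).
Proof.
  intros Hb. split.
  - intros [a [c [Hac [Ha [Hc [Hab Hcb]]]]]].
    assert (Ga : G a) by eauto. assert (Gc : G c) by eauto.
    exists (f a), (f c). rewrite <- !local_minimal, !f_le_iff by auto.
    repeat split; auto. intros E. apply Hac, local_inj; auto.
  - intros [y [z [Hyz [Hy [Hz [Hyb Hzb]]]]]].
    destruct (f_lift b y Hb Hyb) as [a [Hab <-]].
    destruct (f_lift b z Hb Hzb) as [c [Hcb <-]].
    assert (Ga : G a) by eauto. assert (Gc : G c) by eauto.
    exists a, c. rewrite !local_minimal by auto.
    repeat split; auto. intros ->. auto.
Qed.

Lemma local_in_H c v : G c -> G v -> in_H Q c v <-> in_H P (f c) (f v).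
Proof.
  intros Hc Hv. unfold in_H.
  rewrite f_le_iff, local_minimal, local_height1, local_two_minimals by auto. tauto.
Qed.

Lemma local_in_Hstar c v : G c -> G v -> in_Hstar Q c v <-> in_Hstar P (f c) (f v).
Proof.
  intros Hc Hv. unfold in_Hstar. rewrite local_in_H by auto.
  split; intros [HH Hne]; split; auto; intros E.
  - apply Hne, local_inj; auto.
  - subst. auto.
Qed.

Lemma local_in_Lambda c v : G c -> G v -> in_Lambda Q c v <-> in_Lambda P (f c) (f v).
Proof.
  intros Hc Hv. unfold in_Lambda. rewrite local_in_Hstar, local_height1 by auto.
  assert (Habove : (exists x, in_Hstar Q c x /\ le v x /\ height1 Q x) <->
                   (exists y, in_Hstar P (f c) y /\ le (f v) y /\ height1 P y)).
  { split.
    - intros [x [Hx [Hvx Hxh]]].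
      assert (Gx : G x) by (apply (G_down x c); auto; apply Hx).
      exists (f x). rewrite <- local_in_Hstar, <- local_height1, f_le_iff by auto. auto.
    - intros [y [Hy [Hvy Hyh]]].
      destruct (f_lift c y Hc (proj1 (proj1 Hy))) as [x [Hxc <-]].
      assert (Gx : G x) by eauto.
      exists x. rewrite local_in_Hstar, local_height1, <- f_le_iff by auto. auto. }
  rewrite Habove. tauto.
Qed.

Lemma local_d_is_one c : G c -> d_is_one P (f c) -> d_is_one Q c.
Proof.
  intros Hc. rewrite !d_is_one_iff. intros [s [Hs Huniq]].
  destruct (f_lift c s Hc (proj1 (proj1 (proj1 Hs)))) as [a [Hac <-]].
  assert (Ga : G a) by eauto.
  exists a. split; [apply local_in_Lambda; auto|].
  intros b Hb. assert (Gb : G b) by (apply (G_down b c); auto; apply Hb).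
  apply local_inj; auto. apply Huniq, local_in_Lambda; auto.
Qed.

End LocalIso.

Definition defective (P : poset) (x : P) :=
  maximal_in P (allP P) x /\ pos_height_in P (allP P) x /\ ~ d_is_one P x.

Section KPosetFacts.
Variable V : poset.
Hypothesis KV : proper_K_poset V.

Lemma K_dim2 : dim2 V.
Proof. apply KV. Qed.

Lemma finite_mubs : finite_set V (fun x => exists a b,
  minimal V a /\ minimal V b /\ (a <> b /\ mub2 V a b x)).
Proof.
  destruct KV as [[_ [Hmin [_ [Hmub _]]]] _].
  apply finite_pairs.
  - apply (finite_subset V _ _ Hmin). intros x Hx. apply minimal_in_all, Hx.
  - intros a b Ha Hb. destruct (classic (a = b)) as [-> | Hab].
    + exists nil. intros x [Hne _]. congruence.
    + apply (finite_subset V _ _ (Hmub a b (proj2 (minimal_in_all V a) Ha)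
                                        (proj2 (minimal_in_all V b) Hb) Hab)).
      intros x [_ Hx]. exact Hx.
Qed.

Lemma finite_Lambda m : finite_set V (in_Lambda V m).
Proof.
  destruct KV as [[_ [Hmin _]] _].
  apply (finite_union V _ _ _ Hmin finite_mubs). intros x Hx.
  destruct (Lambda_cases V m x Hx) as [[Hh Htwo] | [Hxmin _]].
  - right. destruct (height1_mub V x Hh Htwo) as [a [b Hab]]. exists a, b. tauto.
  - left. apply minimal_in_all, Hxmin.
Qed.

Lemma finite_defective : finite_set V (defective V).
Proof.
  destruct KV as [[_ [_ [Hh2 _]]] _].
  apply (finite_union V _ _ _ Hh2 finite_mubs). intros v [_ [Hpos Hd]].
  destruct (classic (height_ge2 V v)) as [H2 | H2].
  - left. apply height2_in_all; [apply K_dim2 | exact H2].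
  - right. assert (Hv : height1 V v) by (split; [apply pos_height_in_all | ]; auto).
    destruct (classic (two_minimals_below V v)) as [Htwo | Htwo].
    + destruct (height1_mub V v Hv Htwo) as [a [b Hab]]. exists a, b. tauto.
    + exfalso. apply Hd, height1_d_is_one; auto. apply K_dim2.
Qed.

Lemma slash_full_card x z : maximal V x -> minimal V z -> (exists t, slash V x z t) ->
  full_card (slash V x z).
Proof.
  intros Hx Hz [t Ht]. destruct KV as [_ Hprop].
  destruct (Hprop x z) as [Hempty | Hcard].
  - apply maximal_in_all, Hx.
  - apply minimal_in_all, Hz.
  - exfalso. exact (Hempty t Ht).
  - apply full_card_iff. exact Hcard.
Qed.

End KPosetFacts.

(** * Splitting at a maximal node *)

Section Splitting.
Variable V : poset.
Hypothesis KV : proper_K_poset V.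
Variable m : V.
Hypothesis m_max : maximal V m.
Hypothesis m_pos : exists y, lt V y m.
Variable sel : V -> V.
Hypothesis sel_Lambda : forall x, uncovered V m x -> in_Lambda V m (sel x).
Hypothesis sel_above : forall x z, uncovered V m x -> lt V z x -> le z (sel x).
Hypothesis sel_full : forall z l, in_Lambda V m l -> le z l -> (exists t, slash V m z t) ->
  full_card (fun t => slash V m z t /\ sel t = l).

Let D : dim2 V := K_dim2 V KV.

(* [x] lies below the copy of [m] attached to [l]; uncovered nodes are attached to
   the copy chosen by [sel]. *)
Definition below_copy (x l : V) := lt V x m /\ (le x l \/ uncovered V m x /\ sel x = l).

Lemma below_copy_down x y l : below_copy y l -> le x y -> below_copy x l.
Proof.
  intros [Hym Hyl] Hxy. split; [eapply le_lt_trans; eauto|].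
  destruct Hyl as [Hyl | [Hu <-]]; [left; eapply le_trans; eauto|].
  destruct (classic (x = y)) as [-> | Hne]; [right; auto|].
  left. apply sel_above; [exact Hu | split; auto].
Qed.

Lemma below_copy_covered x l : below_copy x l -> ~ uncovered V m x -> le x l.
Proof. intros [_ [Hxl | [Hu _]]] Hnu; tauto. Qed.

Lemma below_copy_uncovered x l : in_Lambda V m l -> below_copy x l -> uncovered V m x ->
  sel x = l.
Proof.
  intros Hl [_ [Hxl | [_ Hsel]]] Hu; auto. exfalso. apply (proj2 Hu). eauto.
Qed.

Lemma below_copy_exists x : lt V x m -> exists l, in_Lambda V m l /\ below_copy x l.
Proof.
  intros Hxm. destruct (classic (uncovered V m x)) as [Hu | Hu].
  - exists (sel x). split; [auto | split; auto].
  - destruct (classic (exists l, in_Lambda V m l /\ le x l)) as [[l [Hl Hxl]] | Hno].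
    + exists l. split; [auto | split; auto].
    + exfalso. apply Hu. split; auto.
Qed.

Lemma ne_m_below x y : le y x -> x <> m -> y <> m.
Proof. intros Hyx Hx ->. apply Hx, m_max, Hyx. Qed.

Definition node := {x : V | x <> m}.
Definition copy := {l : V | in_Lambda V m l}.

Definition split_le (a b : node + copy) : Prop :=
  match a, b with
  | inl x, inl y => le (proj1_sig x) (proj1_sig y)
  | inl x, inr l => below_copy (proj1_sig x) (proj1_sig l)
  | inr l, inr l' => l = l'
  | inr _, inl _ => False
  end.

Lemma split_le_refl a : split_le a a.
Proof. destruct a; simpl; auto. apply le_refl. Qed.

Lemma split_le_trans a b c : split_le a b -> split_le b c -> split_le a c.
Proof.
  destruct a as [x | k], b as [y | k'], c as [z | k'']; simpl; intros Hab Hbc;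
    try contradiction.
  - eapply le_trans; eauto.
  - eapply below_copy_down; eauto.
  - subst. exact Hab.
  - congruence.
Qed.

Lemma split_le_antisym a b : split_le a b -> split_le b a -> a = b.
Proof.
  destruct a as [x | k], b as [y | k']; simpl; intros Hab Hba; try contradiction.
  - f_equal. apply sig_eq, le_antisym; auto.
  - f_equal. exact Hab.
Qed.

Definition split_poset : poset :=
  Poset (node + copy) split_le split_le_refl split_le_trans split_le_antisym.

Definition split_map (u : split_poset) : V :=
  match u with inl x => proj1_sig x | inr _ => m end.

Definition is_node (u : split_poset) : Prop := split_map u <> m.

Definition copy_base (l : copy) : node :=
  exist _ (proj1_sig l) (proj2 (Lambda_lt V m _ (proj2_sig l))).

Lemma is_node_down (a b : split_poset) : le a b -> is_node b -> is_node a.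
Proof.
  destruct a as [x | k], b as [y | k']; unfold is_node; simpl; try tauto.
  intros _ _. exact (proj2_sig x).
Qed.

Lemma split_map_le_iff (a b : split_poset) : is_node a -> is_node b ->
  le (split_map a) (split_map b) <-> le a b.
Proof. destruct a, b; unfold is_node; simpl; tauto. Qed.

Lemma split_map_lift (b : split_poset) y : is_node b -> le y (split_map b) ->
  exists a, le a b /\ split_map a = y.
Proof.
  destruct b as [x | k]; unfold is_node; simpl; [|tauto]. intros Hx Hyx.
  exists (inl (exist _ y (ne_m_below _ _ Hyx Hx))). split; auto.
Qed.

Lemma split_map_mono (a b : split_poset) : le a b -> le (split_map a) (split_map b).
Proof.
  destruct a as [x | k], b as [y | k']; simpl; try tauto.
  - intros Hxy. apply Hxy.
  - intros _. apply le_refl.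
Qed.

Lemma split_map_lt (a b : split_poset) : lt split_poset a b -> lt V (split_map a) (split_map b).
Proof.
  intros [Hab Hne]. destruct a as [x | k], b as [y | k']; simpl in *; try tauto.
  - split; auto. intros E. apply Hne. f_equal. apply sig_eq, E.
  - apply Hab.
  - exfalso. apply Hne. f_equal. exact Hab.
Qed.

Lemma below_node (b : split_poset) (x : node) : le b (inl x : split_poset) ->
  exists y, b = inl y.
Proof. destruct b as [y | k]; simpl; [eauto | tauto]. Qed.

Lemma copy_maximal (l : copy) (b : split_poset) : le (inr l : split_poset) b -> b = inr l.
Proof. destruct b as [y | k]; simpl; [tauto | intros ->; reflexivity]. Qed.

Lemma base_lt_copy (l : copy) : lt split_poset (inl (copy_base l)) (inr l).
Proof.
  split; [|discriminate]. split; [exact (Lambda_lt V m _ (proj2_sig l)) | left; apply le_refl].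
Qed.

Section NodeTransfer.
Variable x : node.
Let Gx : is_node (inl x) := proj2_sig x.

Lemma node_minimal : minimal split_poset (inl x) <-> minimal V (proj1_sig x).
Proof. exact (local_minimal _ _ _ _ is_node_down split_map_le_iff split_map_lift _ Gx). Qed.

Lemma node_height1 : height1 split_poset (inl x) <-> height1 V (proj1_sig x).
Proof. exact (local_height1 _ _ _ _ is_node_down split_map_le_iff split_map_lift _ Gx). Qed.

Lemma node_height_ge2 : height_ge2 split_poset (inl x) <-> height_ge2 V (proj1_sig x).
Proof. exact (local_height_ge2 _ _ _ _ is_node_down split_map_le_iff split_map_lift _ Gx). Qed.

Lemma node_two_minimals :
  two_minimals_below split_poset (inl x) <-> two_minimals_below V (proj1_sig x).
Proof. exact (local_two_minimals _ _ _ _ is_node_down split_map_le_iff split_map_lift _ Gx). Qed.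

Lemma node_ex_lt : (exists a, lt split_poset a (inl x)) <-> exists y, lt V y (proj1_sig x).
Proof. exact (local_ex_lt _ _ _ _ is_node_down split_map_le_iff split_map_lift _ Gx). Qed.

Lemma node_lt_iff (y : node) :
  lt split_poset (inl x) (inl y) <-> lt V (proj1_sig x) (proj1_sig y).
Proof.
  symmetry.
  exact (local_lt_iff _ _ _ _ split_map_le_iff _ (inl y) Gx (proj2_sig y)).
Qed.

Lemma node_d_is_one : d_is_one V (proj1_sig x) -> d_is_one split_poset (inl x).
Proof. exact (local_d_is_one _ _ _ _ is_node_down split_map_le_iff split_map_lift _ Gx). Qed.

Lemma node_maximal : maximal split_poset (inl x) <-> maximal V (proj1_sig x).
Proof.
  split.
  - intros Hx y Hxy. destruct (classic (y = m)) as [-> | Hy].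
    + destruct (below_copy_exists (proj1_sig x)) as [l [Hl Hxl]];
        [split; [exact Hxy | exact (proj2_sig x)] |].
      discriminate (Hx (inr (exist _ l Hl)) Hxl).
    + exact (f_equal split_map (Hx (inl (exist _ y Hy)) Hxy)).
  - intros Hx [y | l] Hxy; simpl in Hxy.
    + f_equal. apply sig_eq, Hx, Hxy.
    + exfalso. apply (proj2_sig x). symmetry. apply Hx, Hxy.
Qed.

End NodeTransfer.

Lemma Lambda_nonempty : exists l, in_Lambda V m l.
Proof.
  destruct m_pos as [y Hym]. destruct (exists_minimal_below V D y) as [c [Hcy Hc]].
  destruct (minimal_covered V m c) as [l [Hl _]]; eauto. eapply le_lt_trans; eauto.
Qed.

Lemma split_finite (A : split_poset -> Prop) (B : V -> Prop) : finite_set V B ->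
  (forall x : node, A (inl x) -> B (proj1_sig x)) -> finite_set split_poset A.
Proof.
  intros HB HAB.
  destruct (finite_set_sig V (fun x => x <> m) B HB) as [ln Hln].
  destruct (finite_set_sig V (in_Lambda V m) _ (finite_Lambda V KV m)) as [lc Hlc].
  exists (map inl ln ++ map inr lc). intros [x | l] Hu; apply in_or_app.
  - left. apply in_map, Hln, HAB, Hu.
  - right. apply in_map, Hlc, proj2_sig.
Qed.

Lemma split_is_splitting : splitting split_poset V m.
Proof.
  exists (fun u : split_poset => match u with inl _ => False | inr _ => True end), split_map.
  split; [|split; [|split; [|split; [|split; [|split; [|split]]]]]].
  - apply (split_finite _ (fun _ => False)); [exists nil; tauto | auto].
  - destruct Lambda_nonempty as [l Hl]. exists (inr (exist _ l Hl)). exact I.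
  - intros [x | l] Hu; [contradiction|]. split.
    + apply maximal_in_all. intros b Hb. apply copy_maximal, Hb.
    + apply pos_height_in_all. eexists. apply base_lt_copy.
  - apply split_map_mono.
  - intros y. destruct (classic (y = m)) as [-> | Hy].
    + destruct Lambda_nonempty as [l Hl]. exists (inr (exist _ l Hl)). reflexivity.
    + exists (inl (exist _ y Hy)). reflexivity.
  - intros [x | l]; simpl; split; try tauto. intros E. exact (proj2_sig x E).
  - intros v Hv. exists (inl (exist _ v Hv)). split; [reflexivity|].
    intros [x | l] E; simpl in E; [|congruence]. f_equal. apply sig_eq, E.
  - intros [x | l] y Hxy; simpl in Hxy.
    + destruct (classic (y = m)) as [-> | Hy].
      * destruct (below_copy_exists (proj1_sig x)) as [l [Hl Hxl]];
          [split; [exact Hxy | exact (proj2_sig x)] |].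
        exists (inr (exist _ l Hl)). split; auto.
      * exists (inl (exist _ y Hy)). split; auto.
    + rewrite (m_max y Hxy). exists (inr l). split; [apply le_refl | reflexivity].
Qed.

Lemma Hstar_copy_iff (l : copy) (b : split_poset) :
  in_Hstar split_poset (inr l) b <->
  exists t : node, b = inl t /\ le (proj1_sig t) (proj1_sig l) /\
    (minimal V (proj1_sig t) \/
     height1 V (proj1_sig t) /\ two_minimals_below V (proj1_sig t)).
Proof.
  split.
  - intros [[Hb Hkind] Hne]. destruct b as [t | l'].
    + rewrite node_minimal, node_height1, node_two_minimals in Hkind.
      exists t. repeat split; auto. apply below_copy_covered; [exact Hb|].
      intros Hu. destruct Hkind as [Hmin | [_ Htwo]].
      * exact (uncovered_not_minimal V m _ Hu Hmin).
      * exact (uncovered_not_two_minimals V D m _ Hu Htwo).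
    + simpl in Hb. subst. contradiction.
  - intros [t [-> [Htl Hkind]]].
    rewrite <- node_minimal, <- node_height1, <- node_two_minimals in Hkind.
    split; [|discriminate]. split; [|exact Hkind].
    split; [eapply le_lt_trans; [exact Htl | exact (Lambda_lt V m _ (proj2_sig l))] | auto].
Qed.

Lemma Lambda_copy_iff (l : copy) (b : split_poset) :
  in_Lambda split_poset (inr l) b <-> b = inl (copy_base l).
Proof.
  assert (Hlm := Lambda_lt V m _ (proj2_sig l)).
  assert (Hbase : in_Hstar split_poset (inr l) (inl (copy_base l))).
  { apply Hstar_copy_iff. exists (copy_base l). split; [reflexivity|]. split; [apply le_refl|].
    destruct (Lambda_cases V m _ (proj2_sig l)) as [Hh | [Hmin _]]; auto. }
  split.
  - intros [Hb Hcond]. apply Hstar_copy_iff in Hb as Hb'.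
    destruct Hb' as [t [-> [Htl Hkind]]]. f_equal. apply sig_eq. simpl.
    apply NNPP. intros Hne.
    destruct (Lambda_cases V m _ (proj2_sig l)) as [[Hlh _] | [Hlmin _]].
    + assert (Htmin : minimal V (proj1_sig t))
        by (apply (minimal_below_height1 V (proj1_sig l)); [exact Hlh | split; auto]).
      destruct Hcond as [Hth | Hno].
      * apply node_height1 in Hth. destruct Hth as [[y Hy] _].
        exact (minimal_not_gt V _ _ Htmin Hy).
      * apply Hno. exists (inl (copy_base l)). split; [exact Hbase|].
        split; [exact Htl | apply node_height1, Hlh].
    + apply Hne, Hlmin, Htl.
  - intros ->. split; [exact Hbase|].
    destruct (Lambda_cases V m _ (proj2_sig l)) as [[Hlh _] | [Hlmin _]];
      [left; apply node_height1, Hlh | right].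
    intros [b [Hb [Hlb Hbh]]]. apply Hstar_copy_iff in Hb.
    destruct Hb as [t [-> [Htl _]]]. apply node_height1 in Hbh.
    assert (E : proj1_sig t = proj1_sig l) by (apply le_antisym; auto).
    destruct Hbh as [[y Hy] _]. rewrite E in Hy. exact (minimal_not_gt V _ _ Hlmin Hy).
Qed.

Lemma copy_d_is_one (l : copy) : d_is_one split_poset (inr l).
Proof.
  apply d_is_one_iff. exists (inl (copy_base l)). split.
  - apply Lambda_copy_iff. reflexivity.
  - intros y. apply Lambda_copy_iff.
Qed.

Lemma defective_split (u : split_poset) : defective split_poset u ->
  exists x : node, u = inl x /\ defective V (proj1_sig x).
Proof.
  intros [Hmax [Hpos Hd]]. destruct u as [x | l]; [|exfalso; apply Hd, copy_d_is_one].
  exists x. split; [reflexivity|]. split; [|split].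
  - apply maximal_in_all, node_maximal, maximal_in_all, Hmax.
  - apply pos_height_in_all, node_ex_lt, pos_height_in_all, Hpos.
  - intros Hdx. apply Hd, node_d_is_one, Hdx.
Qed.

Lemma split_dim2 : dim2 split_poset.
Proof.
  intros C. apply chain3_iff in C. destruct C as [a0 [a1 [a2 [a3 [H01 [H12 H23]]]]]].
  apply (dim2_no_chain3 V D (split_map a0) (split_map a1) (split_map a2) (split_map a3));
    apply split_map_lt; auto.
Qed.

Lemma split_minimal (u : split_poset) : minimal split_poset u ->
  exists x : node, u = inl x /\ minimal V (proj1_sig x).
Proof.
  intros Hu. destruct u as [x | l].
  - exists x. split; [reflexivity | apply node_minimal, Hu].
  - exfalso. exact (minimal_not_gt _ _ _ Hu (base_lt_copy l)).
Qed.

Lemma node_mub2 (a b x : node) : mub2 split_poset (inl a) (inl b) (inl x) ->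
  mub2 V (proj1_sig a) (proj1_sig b) (proj1_sig x).
Proof.
  intros [Hax [Hbx Hmin]]. split; [exact Hax|]. split; [exact Hbx|].
  intros w Haw Hbw Hwx.
  exact (f_equal split_map
           (Hmin (inl (exist _ w (ne_m_below _ _ Hwx (proj2_sig x)))) Haw Hbw Hwx)).
Qed.

Lemma slash_not_copy (u w : split_poset) (l : copy) : ~ slash split_poset u w (inr l).
Proof.
  intros Hs. apply slash_iff in Hs. destruct Hs as [[[Hlu Hne] _] _].
  apply Hne. symmetry. apply copy_maximal, Hlu.
Qed.

Lemma node_lower_unique (z t : node) :
  (lt split_poset (inl z) (inl t) /\ forall s, lt split_poset s (inl t) -> s = inl z) <->
  (lt V (proj1_sig z) (proj1_sig t) /\ forall s, lt V s (proj1_sig t) -> s = proj1_sig z).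
Proof.
  exact (local_lower_unique _ _ _ _ is_node_down split_map_le_iff split_map_lift
           (inl z) (inl t) (proj2_sig z) (proj2_sig t)).
Qed.

Lemma slash_node_iff (x z t : node) :
  slash split_poset (inl x) (inl z) (inl t) <->
  slash V (proj1_sig x) (proj1_sig z) (proj1_sig t).
Proof.
  rewrite !slash_iff, node_lower_unique.
  enough (Hup : (lt split_poset (inl t) (inl x) /\
                 forall s, lt split_poset (inl t) s -> s = inl x) <->
                (lt V (proj1_sig t) (proj1_sig x) /\
                 forall s, lt V (proj1_sig t) s -> s = proj1_sig x)) by (rewrite Hup; tauto).
  rewrite node_lt_iff. split; intros [Htx Habove]; split; auto.
  - intros s Hts. destruct (classic (s = m)) as [-> | Hs].
    + destruct (below_copy_exists (proj1_sig t) Hts) as [l [Hl Htl]].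
      assert (Hlt : lt split_poset (inl t) (inr (exist _ l Hl)))
        by (split; [exact Htl | discriminate]).
      discriminate (Habove _ Hlt).
    + exact (f_equal split_map
               (Habove (inl (exist _ s Hs)) (proj2 (node_lt_iff t (exist _ s Hs)) Hts))).
  - intros [s | l] Hts.
    + f_equal. apply sig_eq, Habove, node_lt_iff, Hts.
    + exfalso. apply (proj2_sig x). symmetry. apply Habove, (proj1 (proj1 Hts)).
Qed.

Lemma slash_copy_iff (l : copy) (z t : node) :
  slash split_poset (inr l) (inl z) (inl t) <->
  slash V m (proj1_sig z) (proj1_sig t) /\ sel (proj1_sig t) = proj1_sig l.
Proof.
  split.
  - intros Hs. apply slash_iff in Hs. destruct Hs as [[[Htl _] Habove] Hlow].
    assert (HV : slash V m (proj1_sig z) (proj1_sig t)).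
    { apply slash_iff. split; [|apply node_lower_unique, Hlow].
      split; [apply Htl|]. intros s Hts. apply NNPP. intros Hs.
      discriminate (Habove (inl (exist _ s Hs)) (proj2 (node_lt_iff t (exist _ s Hs)) Hts)). }
    split; [exact HV|]. apply below_copy_uncovered; [apply proj2_sig | exact Htl |].
    eapply slash_uncovered; eauto.
  - intros [HV Hsel]. assert (Hu := slash_uncovered V m _ _ HV).
    apply slash_iff in HV. destruct HV as [[Htm Habove] Hlow].
    apply slash_iff. split; [|apply node_lower_unique, Hlow].
    split; [split; [split; [exact Htm | right; auto] | discriminate] |].
    intros [s | l'] Hts.
    + exfalso. apply (proj2_sig s), Habove, node_lt_iff, Hts.
    + f_equal. apply sig_eq. rewrite <- Hsel. symmetry.
      apply below_copy_uncovered; [apply proj2_sig | apply Hts | exact Hu].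
Qed.

Lemma slash_infinite_node (x y z : node) :
  lt V (proj1_sig y) (proj1_sig x) -> lt V (proj1_sig z) (proj1_sig y) ->
  ~ finite_set split_poset (slash split_poset (inl x) (inl z)).
Proof.
  pose proof KV as [[_ [_ [_ [_ Hinf]]]] _].
  intros Hyx Hzy Hfin. apply (Hinf _ _ _ Hyx Hzy).
  apply (finite_image _ _ split_map _ _ Hfin). intros t Ht.
  assert (Htm : t <> m).
  { apply ne_m_below with (proj1_sig x); [apply (proj1 (slash_iff V _ _ _) Ht) | apply proj2_sig]. }
  exists (inl (exist _ t Htm)). split; [apply slash_node_iff, Ht | reflexivity].
Qed.

Lemma slash_infinite_copy (l : copy) (y z : node) :
  below_copy (proj1_sig y) (proj1_sig l) -> lt V (proj1_sig z) (proj1_sig y) ->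
  ~ finite_set split_poset (slash split_poset (inr l) (inl z)).
Proof.
  pose proof KV as [[_ [_ [_ [_ Hinf]]]] _].
  intros Hyl Hzy Hfin.
  assert (Hinf_m := Hinf _ _ _ (proj1 Hyl) Hzy).
  assert (Hzl : le (proj1_sig z) (proj1_sig l)).
  { apply below_copy_covered; [eapply below_copy_down; [exact Hyl | apply Hzy] |].
    intros Hu. apply (uncovered_not_minimal V m _ Hu).
    eapply minimal_of_lt_lt; [exact D | exact Hzy | apply Hyl]. }
  assert (Hfull := sel_full _ _ (proj2_sig l) Hzl (not_finite_nonempty V _ Hinf_m)).
  apply Hinf_m, (full_card_finite V _ Hfull).
  apply (finite_image _ _ split_map _ _ Hfin). intros t Ht.
  assert (Htm : t <> m) by apply (proj1 (slash_iff V _ _ _) (proj1 Ht)).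
  exists (inl (exist _ t Htm)). split; [apply slash_copy_iff, Ht | reflexivity].
Qed.

Lemma split_slash_infinite (u v w : split_poset) :
  lt split_poset v u -> lt split_poset w v -> ~ finite_set split_poset (slash split_poset u w).
Proof.
  intros Hvu Hwv.
  destruct v as [y | l']; [|exfalso; apply (proj2 Hvu); symmetry; apply copy_maximal, Hvu].
  destruct (below_node w y (proj1 Hwv)) as [z ->].
  destruct u as [x | l].
  - apply (slash_infinite_node x y z); apply node_lt_iff; auto.
  - apply (slash_infinite_copy l y z); [apply Hvu | apply node_lt_iff, Hwv].
Qed.

Lemma split_K_poset : K_poset split_poset.
Proof.
  pose proof KV as [[_ [Hmin [Hh2 [Hmub _]]]] _].
  split; [apply split_dim2|]. split; [|split; [|split]].
  - apply (split_finite _ _ Hmin). intros x Hx.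
    apply minimal_in_all, node_minimal, minimal_in_all, Hx.
  - apply (split_finite _ _ Hh2). intros x Hx.
    apply height2_in_all; [exact D|]. apply node_height_ge2.
    apply height2_in_all; [apply split_dim2 | exact Hx].
  - intros u v Hu Hv Huv. apply minimal_in_all in Hu, Hv.
    destruct (split_minimal u Hu) as [a [-> Ha]], (split_minimal v Hv) as [b [-> Hb]].
    assert (Hab : proj1_sig a <> proj1_sig b) by (intros E; apply Huv; f_equal; apply sig_eq, E).
    apply (split_finite _ _ (Hmub _ _ (proj2 (minimal_in_all V _) Ha)
                                     (proj2 (minimal_in_all V _) Hb) Hab)).
    intros x Hx. apply node_mub2, Hx.
  - apply split_slash_infinite.
Qed.

(* The splitting embeds into V by sending the nodes into a slash set of full
   cardinality and each copy to its [Lambda] node; slash sets avoid [Lambda]. *)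
Lemma split_equipotent : (exists x z t, maximal V x /\ minimal V z /\ slash V x z t) ->
  equipotent V split_poset.
Proof.
  intros [x [z [t0 [Hx [Hz Ht0]]]]].
  destruct (slash_full_card V KV x z Hx Hz (ex_intro _ t0 Ht0)) as [i [Hi Hrange]].
  assert (Hi_Lambda : forall v, ~ in_Lambda V m (i v)).
  { intros v Hv. apply (slash_not_in_H V m x z (i v)); [apply Hrange; eauto | apply Hv]. }
  destruct Lambda_nonempty as [l0 Hl0].
  apply (schroeder_bernstein _ _
    (fun v => match excluded_middle_informative (v = m) with
              | left _ => inr (exist _ l0 Hl0)
              | right h => inl (exist _ v h) end : split_poset)
    (fun u : split_poset => match u with
                            | inl a => i (proj1_sig a)
                            | inr l => proj1_sig l end)).
  - intros a b E.
    destruct (excluded_middle_informative (a = m)), (excluded_middle_informative (b = m));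
      try discriminate; [congruence | injection E; auto].
  - intros [a | l] [b | l'] E.
    + f_equal. apply sig_eq, Hi, E.
    + exfalso. apply (Hi_Lambda (proj1_sig a)). rewrite E. apply proj2_sig.
    + exfalso. apply (Hi_Lambda (proj1_sig b)). rewrite <- E. apply proj2_sig.
    + f_equal. apply sig_eq, E.
Qed.

Lemma slash_split_equipotent (u : split_poset) (z : node) (B : V -> Prop) :
  (forall t : node, slash split_poset u (inl z) (inl t) <-> B (proj1_sig t)) ->
  (forall t, B t -> t <> m) ->
  equipotent {s | slash split_poset u (inl z) s} {t | B t}.
Proof.
  intros HB Hm. apply (equipotent_sig_map split_map).
  - intros [t | l] Hs; [apply HB, Hs | exfalso; eapply slash_not_copy; eauto].
  - intros [a | l] [b | l'] Ha Hb E; try (exfalso; eapply slash_not_copy; eauto; fail).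
    f_equal. apply sig_eq, E.
  - intros t Ht. exists (inl (exist _ t (Hm t Ht))). split; [apply HB, Ht | reflexivity].
Qed.

Lemma slash_card_node (x z : node) : maximal V (proj1_sig x) -> minimal V (proj1_sig z) ->
  empty_set split_poset (slash split_poset (inl x) (inl z)) \/
  same_card_as_carrier split_poset (slash split_poset (inl x) (inl z)).
Proof.
  intros Hx Hz.
  destruct (classic (exists t, slash V (proj1_sig x) (proj1_sig z) t)) as [Hne | Hemp].
  - right. apply (equipotent_trans _ {t | slash V (proj1_sig x) (proj1_sig z) t}).
    + apply slash_split_equipotent; [intros t; apply slash_node_iff|].
      intros t Ht ->. apply (proj2_sig x), m_max.
      exact (proj1 (proj1 (proj1 (proj1 (slash_iff V _ _ _) Ht)))).
    + apply (equipotent_trans _ V); [apply full_card_iff, slash_full_card; auto|].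
      destruct Hne as [t Ht]. apply split_equipotent. exists (proj1_sig x), (proj1_sig z), t. auto.
  - left. intros [t | l] Ht; [apply slash_node_iff in Ht; eauto | eapply slash_not_copy; eauto].
Qed.

Lemma slash_card_copy (l : copy) (z : node) : minimal V (proj1_sig z) ->
  empty_set split_poset (slash split_poset (inr l) (inl z)) \/
  same_card_as_carrier split_poset (slash split_poset (inr l) (inl z)).
Proof.
  intros Hz. set (B := fun t => slash V m (proj1_sig z) t /\ sel t = proj1_sig l).
  destruct (classic (exists t, B t)) as [[t [Ht Hsel]] | Hemp].
  - right. apply (equipotent_trans _ {t | B t}).
    + apply slash_split_equipotent; [intros s; apply slash_copy_iff|].
      intros s [Hs _] ->. exact (lt_irrefl V m (proj1 (proj1 (proj1 (slash_iff V _ _ _) Hs)))).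
    + assert (Hzl : le (proj1_sig z) (proj1_sig l)).
      { rewrite <- Hsel. apply sel_above; [eapply slash_uncovered; eauto|].
        apply (proj1 (slash_iff V _ _ _) Ht). }
      apply (equipotent_trans _ V).
      * apply full_card_iff, sel_full; eauto. apply proj2_sig.
      * apply split_equipotent. exists m, (proj1_sig z), t. auto.
  - left. intros [s | l'] Hs; [apply slash_copy_iff in Hs; eauto | eapply slash_not_copy; eauto].
Qed.

Lemma split_proper : proper_K_poset split_poset.
Proof.
  split; [apply split_K_poset|].
  intros u w Hu Hw. apply maximal_in_all in Hu. apply minimal_in_all in Hw.
  destruct (split_minimal w Hw) as [z [-> Hz]].
  destruct u as [x | l].
  - apply slash_card_node; [apply node_maximal, Hu | exact Hz].
  - apply slash_card_copy, Hz.
Qed.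

End Splitting.

(** * Distributing the slash sets among the copies *)

Section Selection.
Variable V : poset.
Hypothesis KV : proper_K_poset V.
Variable m : V.
Hypothesis m_max : maximal V m.

Let D : dim2 V := K_dim2 V KV.

(* A non-minimal [Lambda] node above [c] has a second minimal node [c'] below it, and
   the slash sets [[m/c]] and [[m/c']] are disjoint and of full cardinality. *)
Lemma sum_self_of_two_Lambdas c l1 l2 : minimal V c ->
  in_Lambda V m l1 -> in_Lambda V m l2 -> le c l1 -> le c l2 -> l1 <> l2 ->
  (exists t, slash V m c t) -> equipotent (V + V) V.
Proof.
  intros Hc Hl1 Hl2 Hcl1 Hcl2 Hne Hslash.
  assert (Hh : exists h, in_Lambda V m h /\ le c h /\ ~ minimal V h).
  { destruct (classic (minimal V l1)) as [H1 | H1]; [|exists l1; auto].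
    destruct (classic (minimal V l2)) as [H2 | H2]; [|exists l2; auto].
    exfalso. apply Hne. rewrite <- (H1 c Hcl1), <- (H2 c Hcl2). reflexivity. }
  destruct Hh as [h [Hh [Hch Hhmin]]].
  destruct (Lambda_cases V m h Hh) as [[_ [a [b [Hab [Ha [Hb [Hah Hbh]]]]]]] | [Hmin _]];
    [|contradiction].
  assert (Hc' : exists c', minimal V c' /\ c' <> c /\ le c' h).
  { destruct (classic (a = c)) as [-> | Hac]; [exists b | exists a]; auto. }
  destruct Hc' as [c' [Hc'min [Hc'c Hc'h]]].
  assert (Hc'h_lt : lt V c' h) by (split; [exact Hc'h | intros ->; contradiction]).
  pose proof KV as [[_ [_ [_ [_ Hinf]]]] _].
  assert (Hslash' := not_finite_nonempty V _ (Hinf m h c' (Lambda_lt V m h Hh) Hc'h_lt)).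
  apply (sum_self_equipotent V (slash V m c) (slash V m c')).
  - intros t Ht Ht'. apply Hc'c.
    apply (proj2 (slash_lower_unique V _ _ _ Ht)), (proj1 (slash_lower_unique V _ _ _ Ht')).
  - apply slash_full_card; auto.
  - apply slash_full_card; auto.
Qed.

Lemma Lambda_partition c : minimal V c -> lt V c m ->
  exists q : V -> V, (forall x, in_Lambda V m (q x) /\ le c (q x)) /\
    ((exists t, slash V m c t) -> forall l, in_Lambda V m l -> le c l ->
       full_card (fun t => slash V m c t /\ q t = l)).
Proof.
  intros Hc Hcm. destruct (minimal_covered V m c Hcm Hc) as [l1 [Hl1 Hcl1]].
  destruct (classic ((exists t, slash V m c t) /\
                     exists l2, in_Lambda V m l2 /\ le c l2 /\ l2 <> l1))
    as [[Hslash [l2 [Hl2 [Hcl2 Hne]]]] | Hno].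
  - assert (HVV := sum_self_of_two_Lambdas c l2 l1 Hc Hl2 Hl1 Hcl2 Hcl1 Hne Hslash).
    destruct (finite_exact_list V (fun l => in_Lambda V m l /\ le c l)) as [C HC].
    { apply (finite_subset V _ _ (finite_Lambda V KV m)). tauto. }
    destruct (full_card_partition V V HVV C (slash V m c)) as [q [HqC Hfib]].
    + intros E. assert (HinC : In l1 C) by (apply HC; auto). rewrite E in HinC. exact HinC.
    + apply slash_full_card; auto.
    + exists q. split; [intros x; apply HC, HqC|].
      intros _ l Hl Hcl. apply Hfib, HC. auto.
  - exists (fun _ => l1). split; [auto|]. intros Hslash l Hl Hcl.
    assert (E : l = l1) by (apply NNPP; intros Hne; apply Hno; eauto 6).
    subst l. apply (full_card_mono V (slash V m c)); [apply slash_full_card; auto | tauto].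
Qed.

Lemma exists_selection : exists sel : V -> V,
  (forall x, uncovered V m x -> in_Lambda V m (sel x)) /\
  (forall x z, uncovered V m x -> lt V z x -> le z (sel x)) /\
  (forall z l, in_Lambda V m l -> le z l -> (exists t, slash V m z t) ->
     full_card (fun t => slash V m z t /\ sel t = l)).
Proof.
  destruct (choice (fun c (q : V -> V) => minimal V c -> lt V c m ->
      (forall x, in_Lambda V m (q x) /\ le c (q x)) /\
      ((exists t, slash V m c t) -> forall l, in_Lambda V m l -> le c l ->
         full_card (fun t => slash V m c t /\ q t = l)))) as [Q HQ].
  { intros c. destruct (classic (minimal V c /\ lt V c m)) as [[Hc Hcm] | Hn].
    - destruct (Lambda_partition c Hc Hcm) as [q Hq]. exists q. auto.
    - exists (fun x => x). tauto. }
  destruct (choice (fun x y => (exists z, lt V z x) -> lt V y x)) as [lower Hlower].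
  { intros x. destruct (classic (exists z, lt V z x)) as [[z Hz] | Hn]; [exists z | exists x]; tauto. }
  assert (Hlower_slash : forall z t, slash V m z t -> lower t = z).
  { intros z t Ht. destruct (slash_lower_unique V _ _ _ Ht) as [Hzt Huniq]. eauto. }
  exists (fun x => Q (lower x) x). split; [|split].
  - intros x Hx. destruct (uncovered_unique_lower V D m x Hx) as [c [Hcx [Hc Huniq]]].
    rewrite (Huniq (lower x)) by eauto.
    apply (HQ c Hc (lt_trans V _ _ _ Hcx (proj1 Hx))).
  - intros x z Hx Hzx. destruct (uncovered_unique_lower V D m x Hx) as [c [Hcx [Hc Huniq]]].
    rewrite (Huniq (lower x)), (Huniq z) by eauto.
    apply (HQ c Hc (lt_trans V _ _ _ Hcx (proj1 Hx))).
  - intros z l Hl Hzl [t Ht].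
    destruct (slash_lower_unique V _ _ _ Ht) as [Hzt _].
    assert (Htm : lt V t m) by apply (proj1 (slash_iff V _ _ _) Ht).
    assert (Hz : minimal V z) by (eapply minimal_of_lt_lt; eauto).
    apply (full_card_mono V (fun s => slash V m z s /\ Q z s = l)).
    + apply (HQ z Hz (lt_trans V _ _ _ Hzt Htm)); eauto.
    + intros s [Hs Hq]. rewrite (Hlower_slash z s Hs). auto.
Qed.

End Selection.

Lemma split_step (V : poset) (m : V) : proper_K_poset V ->
  maximal_in V (allP V) m -> pos_height_in V (allP V) m ->
  exists (U : poset) (ps : V -> U), splitting U V m /\ proper_K_poset U /\
    forall u, defective U u -> exists v, defective V v /\ v <> m /\ ps v = u.
Proof.
  intros KV Hmax Hpos. apply maximal_in_all in Hmax. apply pos_height_in_all in Hpos.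
  destruct (exists_selection V KV m Hmax) as [sel [Hsel1 [Hsel2 Hsel3]]].
  destruct (Lambda_nonempty V KV m Hpos) as [l0 Hl0].
  exists (split_poset V m sel Hsel2),
    (fun v => match excluded_middle_informative (v = m) with
              | left _ => inr (exist _ l0 Hl0)
              | right h => inl (exist _ v h) end).
  split; [apply split_is_splitting; auto|]. split; [apply split_proper; auto|].
  intros u Hu. destruct (defective_split V KV m Hmax sel Hsel1 Hsel2 u Hu) as [x [-> Hx]].
  exists (proj1_sig x). split; [exact Hx|]. split; [exact (proj2_sig x)|].
  destruct (excluded_middle_informative (proj1_sig x = m)) as [E | Hne];
    [contradiction (proj2_sig x) | f_equal; apply sig_eq; reflexivity].
Qed.

(** * Induction on the defective nodes *)

Definition has_simplification (V : poset) : Prop :=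
  exists (l : nat) (Vs : nat -> poset),
    Vs 0 = V /\
    (forall i, i <= l -> proper_K_poset (Vs i)) /\
    (forall i, i < l ->
       exists n : Vs i,
         maximal_in (Vs i) (allP (Vs i)) n /\
         pos_height_in (Vs i) (allP (Vs i)) n /\
         splitting (Vs (S i)) (Vs i) n) /\
    simple (Vs l).

Lemma simple_of_no_defective (V : poset) : proper_K_poset V ->
  (forall v, ~ defective V v) -> simple V.
Proof.
  intros KV Hno. split; [exact KV|]. intros m Hmax Hpos.
  apply NNPP. intros Hd. exact (Hno m (conj Hmax (conj Hpos Hd))).
Qed.

Lemma has_simplification_simple (V : poset) : simple V -> has_simplification V.
Proof.
  intros HV. exists 0, (fun _ => V). split; [reflexivity|]. split; [|split; [|exact HV]].
  - intros i _. apply HV.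
  - intros i Hi. inversion Hi.
Qed.

Lemma has_simplification_split (V U : poset) (m : V) : proper_K_poset V ->
  maximal_in V (allP V) m -> pos_height_in V (allP V) m -> splitting U V m ->
  has_simplification U -> has_simplification V.
Proof.
  intros KV Hmax Hpos Hsplit [l [Vs [H0 [Hprop [Hsteps Hsimple]]]]].
  exists (S l), (fun i => match i with 0 => V | S j => Vs j end).
  split; [reflexivity|]. split; [|split; [|exact Hsimple]].
  - intros [|i] Hi; [exact KV | apply Hprop; lia].
  - intros [|i] Hi.
    + exists m. simpl. rewrite H0. auto.
    + apply Hsteps. lia.
Qed.

Lemma shorter_defective_cover (V U : poset) (m : V) (ps : V -> U) (lb : list V) :
  In m lb ->
  (forall u, defective U u -> exists v, defective V v /\ v <> m /\ ps v = u) ->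
  (forall v, defective V v -> In v lb) ->
  exists lu, length lu < length lb /\ forall u, defective U u -> In u lu.
Proof.
  intros Hm Hps Hlb. set (dec := fun x y : V => excluded_middle_informative (x = y)).
  exists (map ps (remove dec m lb)). split.
  - rewrite length_map. apply remove_length_lt, Hm.
  - intros u Hu. destruct (Hps u Hu) as [v [Hv [Hvm <-]]]. apply in_map, in_in_remove; auto.
Qed.

Lemma has_simplification_of_cover (N : nat) : forall V : poset, proper_K_poset V ->
  forall lb : list V, length lb <= N -> (forall v, defective V v -> In v lb) ->
  has_simplification V.
Proof.
  induction N as [|N IH]; intros V KV lb Hlen Hlb;
    (destruct (classic (exists v, defective V v)) as [[m Hm] | Hno];
     [|apply has_simplification_simple, simple_of_no_defective; eauto]).
  - destruct lb; [destruct (Hlb m Hm) | simpl in Hlen; lia].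
  - destruct Hm as [Hmax [Hpos Hd]].
    destruct (split_step V m KV Hmax Hpos) as [U [ps [Hsplit [KU Hps]]]].
    destruct (shorter_defective_cover V U m ps lb (Hlb m (conj Hmax (conj Hpos Hd))) Hps Hlb)
      as [lu [Hlu Hcover]].
    apply (has_simplification_split V U m KV Hmax Hpos Hsplit).
    apply (IH U KU lu); [lia | exact Hcover].
Qed.

Theorem theorem5p6 (V : poset) :
  proper_K_poset V ->
  exists (l : nat) (Vs : nat -> poset),
    Vs 0 = V /\
    (forall i, i <= l -> proper_K_poset (Vs i)) /\
    (forall i, i < l ->
       exists n : Vs i,
         maximal_in (Vs i) (allP (Vs i)) n /\
         pos_height_in (Vs i) (allP (Vs i)) n /\
         splitting (Vs (S i)) (Vs i) n) /\
    simple (Vs l).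
Proof.
  intros KV. destruct (finite_defective V KV) as [lb Hlb].
  exact (has_simplification_of_cover (length lb) V KV lb (le_n _) Hlb).
Qed.
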